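(* Let $\varepsilon>0$, let $G$ be a graph and let $w:V(G)\to[0,1]$ be a weight function with $w(V(G))=1$. Let $\mathcal{S}=(S_1,\dots,S_k)$ be a loosely laminar sequence of separations of $G$ such that every $S\in\mathcal{S}$ is $\varepsilon$-skewed, with an anchor $v_i\in C(S_i)$ chosen for each $i$, such that every vertex of $G$ is the anchor of at most one separation in $\mathcal{S}$. Let $\beta_{\mathcal{S}}$ be the central bag for $\mathcal{S}$. Then: (i) $C(S)\subseteq\beta_{\mathcal{S}}$ for every $S\in\mathcal{S}$; (ii) if $G$ is connected and $G[C(S)]$ is connected for every $S\in\mathcal{S}$, then $G[\beta_{\mathcal{S}}]$ is connected; (iii) $w_{\mathcal{S}}(\beta_{\mathcal{S}})=1$ and $\max_{v\in\beta_{\mathcal{S}}}w_{\mathcal{S}}(v)\le \max_{v\in V(G)}w(v)+\varepsilon$.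
   Context: For $X\subseteq V(G)$, $w(X)=\sum_{x\in X}w(x)$. A separation of $G$ is a triple $S=(A,C,B)$ of pairwise disjoint sets with $A\cup C\cup B=V(G)$ and $A$ anticomplete to $B$ (no edges between them); write $A(S)=A$, $C(S)=C$, $B(S)=B$. A separation $(A,C,B)$ is $\varepsilon$-skewed if $w(A)<\varepsilon$ (the paper's convention: whenever a separation is $\varepsilon$-skewed, it is labeled so that $w(A)<\varepsilon$). Two separations $S_1,S_2$ are loosely non-crossing if $A(S_1)\cap C(S_2)=\emptyset$ and $A(S_2)\cap C(S_1)=\emptyset$; a sequence of separations is loosely laminar if every two of its members are loosely non-crossing. The central bag for $\mathcal{S}$ is $\beta_{\mathcal{S}}=\bigcap_{S\in\mathcal{S}}(B(S)\cup C(S))$. Writing $A_i=A(S_i)$, the weight function $w_{\mathcal{S}}$ on $\beta_{\mathcal{S}}$ is defined by $w_{\mathcal{S}}(v)=w(v)+w(A_i\setminus\bigcup_{1\le j<i}A_j)$ if $v=v_i$ is the anchor of $S_i$, and $w_{\mathcal{S}}(v)=w(v)$ otherwise; $w_{\mathcal{S}}(X)=\sum_{x\in X}w_{\mathcal{S}}(x)$. *)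

From mathcomp Require Import all_boot all_order all_algebra.
Set Implicit Arguments. Unset Strict Implicit. Unset Printing Implicit Defensive.
Import Order.TTheory GRing.Theory Num.Theory.
Local Open Scope ring_scope.

Definition simple_graph (T : finType) (e : rel T) : Prop :=
  irreflexive e /\ symmetric e.

Definition induced_rel (T : finType) (e : rel T) (X : {set T}) : rel T :=
  [rel x y | [&& e x y, x \in X & y \in X]].
Definition connected_in (T : finType) (e : rel T) (X : {set T}) : Prop :=
  forall x y, x \in X -> y \in X -> connect (induced_rel e X) x y.

Definition sepA (T : finType) (S : {set T} * {set T} * {set T}) := S.1.1.
Definition sepC (T : finType) (S : {set T} * {set T} * {set T}) := S.1.2.
Definition sepB (T : finType) (S : {set T} * {set T} * {set T}) := S.2.

Definition is_separation (T : finType) (e : rel T) (S : {set T} * {set T} * {set T}) : Prop :=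
  [/\ [disjoint sepA S & sepC S], [disjoint sepA S & sepB S],
      [disjoint sepC S & sepB S],
      sepA S :|: sepC S :|: sepB S = setT &
      forall a b, a \in sepA S -> b \in sepB S -> ~~ e a b].

Definition wset (T : finType) (R : numDomainType) (w : T -> R) (X : {set T}) : R :=
  \sum_(x in X) w x.

Definition skewed (T : finType) (R : numDomainType) (w : T -> R) (eps : R)
  (S : {set T} * {set T} * {set T}) : Prop := wset w (sepA S) < eps.

Definition loosely_non_crossing (T : finType) (S1 S2 : {set T} * {set T} * {set T}) : Prop :=
  sepA S1 :&: sepC S2 = set0 /\ sepA S2 :&: sepC S1 = set0.

Definition loosely_laminar (T : finType) (k : nat) (S : 'I_k -> {set T} * {set T} * {set T}) : Prop :=
  forall i j, loosely_non_crossing (S i) (S j).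

Definition central_bag (T : finType) (k : nat) (S : 'I_k -> {set T} * {set T} * {set T}) : {set T} :=
  \bigcap_(i < k) (sepB (S i) :|: sepC (S i)).

Definition wS (T : finType) (R : numDomainType) (w : T -> R) (k : nat)
  (S : 'I_k -> {set T} * {set T} * {set T}) (v : 'I_k -> T) (x : T) : R :=
  match [pick i | v i == x] with
  | Some i => w x + wset w (sepA (S i) :\: \bigcup_(j < k | (j < i)%N) sepA (S j))
  | None => w x
  end.

From mathcomp Require Import all_boot all_order all_algebra.
Set Implicit Arguments. Unset Strict Implicit. Unset Printing Implicit Defensive.
Import Order.TTheory GRing.Theory Num.Theory.
Local Open Scope ring_scope.

(* A vertex lies outside the central bag exactly when it lies in some A(S_i), and loose
   laminarity keeps every C(S_j) away from every A(S_i); this gives (i).  For (ii), enlarge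
   the component of x in G[bag] by each A(S_i) whose C(S_i) meets it: an edge leaving A(S_i)
   ends in C(S_i), which is a connected subgraph of the bag, so no edge of G leaves the
   enlarged set and it contains y.  For (iii), the sets A_i minus the earlier A_j partition
   the complement of the bag, each has weight below eps, and injectivity of the anchors
   moves each one onto its own anchor. *)

Section Separation.
Variables (T : finType) (e : rel T) (S : {set T} * {set T} * {set T}).
Hypothesis sepS : is_separation e S.

Lemma sepBC_notA x : (x \in sepB S :|: sepC S) = (x \notin sepA S).
Proof.
case: sepS => dAC dAB _ cover _.
have := in_setT x; rewrite -cover !inE.
case xA: (x \in sepA S) => /=; last by rewrite orbC.
by rewrite (disjointFr dAC xA) (disjointFr dAB xA).
Qed.

Lemma sepC_notAB x : x \notin sepA S -> x \notin sepB S -> x \in sepC S.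
Proof. by rewrite -sepBC_notA inE => /orP[->|]. Qed.

Lemma sepA_edge_notB a b : a \in sepA S -> e a b -> b \notin sepB S.
Proof.
case: sepS => _ _ _ _ anticomplete aA eab.
by apply/negP => /(anticomplete a b aA); rewrite eab.
Qed.

End Separation.

Section Disjointed.
Variables (T : finType) (k : nat) (F : 'I_k -> {set T}).

Definition disjointed i := F i :\: \bigcup_(j < k | (j < i)%N) F j.

Lemma disjointed_sub i : disjointed i \subset F i.
Proof. exact: subsetDl. Qed.

Lemma disjointed_trivI i j : i != j -> [disjoint disjointed i & disjointed j].
Proof.
wlog lt_ij : i j / (i < j)%N.
  move=> hyp ne_ij; case: (ltngtP i j) => [/hyp|/hyp|/val_inj eq_ij].
  - exact.
  - by rewrite disjoint_sym; apply; rewrite eq_sym.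
  - by rewrite eq_ij eqxx in ne_ij.
move=> _.
rewrite -setI_eq0 -subset0; apply/subsetP => x /setIP[/setDP[xFi _]].
by case/setDP=> _ /bigcupP[]; exists i.
Qed.

Lemma bigcup_disjointed : \bigcup_i disjointed i = \bigcup_i F i.
Proof.
apply/eqP; rewrite eqEsubset; apply/andP; split.
  by apply/bigcupsP => i _; apply: bigcup_max (disjointed_sub i).
apply/subsetP => x /bigcupP[i0 _ xFi0].
case: (@arg_minnP _ i0 (fun i => x \in F i) val xFi0) => m xFm min_m.
apply/bigcupP; exists m => //; rewrite inE xFm andbT.
by apply/bigcupP=> -[j lt_jm /min_m]; rewrite leqNgt lt_jm.
Qed.

Lemma sum_disjointed (V : nmodType) (w : T -> V) :
  \sum_i \sum_(x in disjointed i) w x = \sum_(x in \bigcup_i F i) w x.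
Proof.
by rewrite -bigcup_disjointed partition_disjoint_bigcup //; apply: disjointed_trivI.
Qed.

End Disjointed.

Lemma wset_subset (T : finType) (R : numDomainType) (w : T -> R) (A B : {set T}) :
  (forall x, 0 <= w x) -> A \subset B -> wset w A <= wset w B.
Proof.
move=> w_ge0 sAB; rewrite /wset [X in _ <= X](big_setID A) (setIidPr sAB) /=.
by rewrite lerDl sumr_ge0.
Qed.

Lemma wS_le_max (T : finType) (k : nat) (S : 'I_k -> {set T} * {set T} * {set T})
  (R : realDomainType) (w : T -> R) (v : 'I_k -> T) eps :
  0 <= eps -> (forall x, 0 <= w x) -> (forall i, skewed w eps (S i)) ->
  forall x, wS w S v x <= \big[Num.max/0]_u w u + eps.
Proof.
move=> eps_ge0 w_ge0 skewS x; rewrite /wS.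
case: pickP => [i _|_]; last by rewrite -[w x]addr0 lerD ?le_bigmax.
apply: lerD; first exact: le_bigmax.
apply: le_trans (ltW (skewS i)); apply: wset_subset => //; exact: disjointed_sub.
Qed.

Section CentralBag.
Variables (T : finType) (e : rel T) (k : nat) (S : 'I_k -> {set T} * {set T} * {set T}).
Hypothesis sepS : forall i, is_separation e (S i).

Lemma central_bagE : central_bag S = ~: \bigcup_i sepA (S i).
Proof.
apply/setP => x; rewrite inE; apply/bigcapP/negP => [inB /bigcupP[i _ xA]|notA i _].
  by move: (inB i isT); rewrite (sepBC_notA (sepS i)) xA.
by rewrite (sepBC_notA (sepS i)); apply/negP => xA; apply: notA; apply/bigcupP; exists i.
Qed.

Lemma central_bag_notA x i : x \in central_bag S -> x \notin sepA (S i).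
Proof. by rewrite central_bagE inE; apply: contra => xA; apply/bigcupP; exists i. Qed.

Lemma notin_central_bag x : x \notin central_bag S -> exists i, x \in sepA (S i).
Proof. by rewrite central_bagE inE negbK => /bigcupP[i _]; exists i. Qed.

Hypothesis lamS : loosely_laminar S.

Lemma sepC_sub_central_bag i : sepC (S i) \subset central_bag S.
Proof.
apply/subsetP => x xC; rewrite central_bagE inE; apply/bigcupP => -[j _ xA].
by case: (lamS j i) => /setP/(_ x); rewrite !inE xA xC.
Qed.

Hypothesis e_sym : symmetric e.
Hypothesis connC : forall i, connected_in e (sepC (S i)).

Local Notation bag := (central_bag S).
Local Notation bag_connect := (connect (induced_rel e bag)).

Lemma bag_connect_sepC i a b : a \in sepC (S i) -> b \in sepC (S i) -> bag_connect a b.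
Proof.
move=> aC bC; move: (connC aC bC); apply: connect_sub => u u' /and3P[euu' uC u'C].
by apply: connect1; rewrite /induced_rel /= euu' !(subsetP (sepC_sub_central_bag i)).
Qed.

Section Component.
Variable x : T.

Definition bag_component := [set z in bag | bag_connect x z].

Definition component_hull :=
  bag_component :|: \bigcup_(i | [exists c in sepC (S i), c \in bag_component]) sepA (S i).

Lemma component_hull_edge_component u u' :
  u \in bag_component -> e u u' -> u' \in component_hull.
Proof.
case/setIdP=> ub xu euu'; rewrite inE; case u'b: (u' \in bag).
  by rewrite inE u'b (connect_trans xu) // connect1 // /induced_rel /= euu' ub u'b.
have [i u'A] := notin_central_bag (negbT u'b).
have uC : u \in sepC (S i).
  apply: (sepC_notAB (sepS i)); first exact: central_bag_notA.
  by apply: (sepA_edge_notB (sepS i) u'A); rewrite e_sym.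
apply/orP; right; apply/bigcupP; exists i => //.
by apply/existsP; exists u; rewrite uC inE ub.
Qed.

Lemma component_hull_edge_sepA i u u' :
  [exists c in sepC (S i), c \in bag_component] -> u \in sepA (S i) -> e u u' ->
  u' \in component_hull.
Proof.
move=> meets uA euu'; rewrite inE.
case u'A: (u' \in sepA (S i)); first by apply/orP; right; apply/bigcupP; exists i.
have u'C : u' \in sepC (S i).
  by rewrite (sepC_notAB (sepS i)) ?u'A // (sepA_edge_notB (sepS i) uA).
case/exists_inP: meets => c cC /setIdP[_ xc].
rewrite inE (subsetP (sepC_sub_central_bag i)) //=.
by rewrite (connect_trans xc (bag_connect_sepC cC u'C)).
Qed.

Lemma closed_component_hull : closed e component_hull.
Proof.
suff hull_edge u u' : e u u' -> u \in component_hull -> u' \in component_hull.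
  by move=> u u' euu'; apply/idP/idP; apply: hull_edge; rewrite // e_sym.
move=> euu'; case/setUP => [uZ|/bigcupP[i meets uA]].
  exact: component_hull_edge_component uZ euu'.
exact: component_hull_edge_sepA meets uA euu'.
Qed.

Lemma central_bag_component_hull y :
  y \in bag -> y \in component_hull -> bag_connect x y.
Proof.
move=> yb /setUP[/setIdP[] //|/bigcupP[i _ yA]].
by move: (central_bag_notA i yb); rewrite yA.
Qed.

End Component.

Lemma connected_central_bag : connected_in e setT -> connected_in e bag.
Proof.
move=> connG x y xb yb; apply: central_bag_component_hull => //.
have xy : connect e x y.
  rewrite -(eq_connect (e := induced_rel e setT)) ?connG // => a b.
  by rewrite /induced_rel /= !in_setT !andbT.
by rewrite -(closed_connect (closed_component_hull x) xy) !inE xb connect0.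
Qed.

Section Weights.
Variables (R : numDomainType) (w : T -> R) (v : 'I_k -> T).
Hypothesis v_inj : injective v.

Lemma wS_sum x :
  wS w S v x = w x + \sum_(i | v i == x) wset w (disjointed (fun j => sepA (S j)) i).
Proof.
rewrite /wS; case: pickP => [i /eqP vi|no_anchor]; last by rewrite big_pred0 ?addr0.
rewrite [X in _ = _ + X](big_pred1 i) // => j.
by rewrite -vi /=; apply/eqP/eqP => [/v_inj|->].
Qed.

Lemma sum_wS_central_bag :
  (forall i, v i \in sepC (S i)) -> \sum_(x in bag) wS w S v x = \sum_x w x.
Proof.
move=> vC; under eq_bigr do rewrite wS_sum; rewrite big_split /=.
have -> : \sum_(x in bag) \sum_(i | v i == x) wset w (disjointed (fun j => sepA (S j)) i)
          = \sum_i wset w (disjointed (fun j => sepA (S j)) i).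
  rewrite [RHS](partition_big v (mem bag)) // => i _.
  exact: (subsetP (sepC_sub_central_bag i)).
rewrite sum_disjointed [RHS](bigID (mem (\bigcup_i sepA (S i)))) addrC /=.
by congr (_ + _); apply: eq_bigl => x; rewrite central_bagE inE.
Qed.

End Weights.

End CentralBag.

Theorem lemma3p2 (R : realFieldType) (T : finType) (e : rel T) (w : T -> R)
  (eps : R) (k : nat) (S : 'I_k -> {set T} * {set T} * {set T}) (v : 'I_k -> T) :
  0 < eps ->
  simple_graph e ->
  (forall x, 0 <= w x <= 1) ->
  \sum_(x : T) w x = 1 ->
  (forall i, is_separation e (S i)) ->
  loosely_laminar S ->
  (forall i, skewed w eps (S i)) ->
  (forall i, v i \in sepC (S i)) ->
  injective v ->
  [/\ forall i, sepC (S i) \subset central_bag S,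
      (connected_in e setT -> (forall i, connected_in e (sepC (S i))) ->
         connected_in e (central_bag S)),
      \sum_(x in central_bag S) wS w S v x = 1 &
      forall x, x \in central_bag S ->
        wS w S v x <= \big[Num.max/0]_(u : T) w u + eps].
Proof.
move=> eps_gt0 [_ e_sym] w01 w_total sepS lamS skewS vC v_inj.
have w_ge0 x : 0 <= w x by case/andP: (w01 x).
split.
- exact: sepC_sub_central_bag.
- by move=> connG connC; apply: connected_central_bag.
- by rewrite (sum_wS_central_bag sepS lamS w v_inj vC).
- by move=> x _; apply: wS_le_max => //; apply: ltW.
Qed.
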